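(* Let $X=\mathbb{R}/\mathbb{Z}$ be the circle with its standard metric, and let $\mu_1=\mu_2$ be Lebesgue measure. Let $(X,T_1,\mu_1)$ be exponentially mixing for $BV$ against $L^\infty$ and let $T_2(x)=x+\alpha \bmod 1$ be the rotation by an angle $\alpha$. Let $(r_n)_n$ be a sequence of positive numbers. (1) If $n^2r_n\to0$, then $(\mu_1\times\mu_2)(\liminf_n E_{n,r_n}^{T_1,T_2})=0$. (2) If $(r_n)_n$ and $(nr_n)_n$ are decreasing and $\sum_{n=1}^\infty nr_n<\infty$, then $(\mu_1\times\mu_2)(\limsup_n E_{n,r_n}^{T_1,T_2})=0$.
   Context: $(X,T,\mu)$ is exponentially mixing for $BV$ against $L^\infty$ if there are $C,\theta>0$ such that for all $\psi$ of bounded variation, all $\varphi\in L^\infty(\mu)$ and all $n\ge0$, $\bigl|\int\psi\cdot\varphi\circ T^n\,d\mu-\int\psi\,d\mu\int\varphi\,d\mu\bigr|\le C\|\psi\|_{BV}\|\varphi\|_{L^\infty}e^{-\theta n}$. For $n\in\mathbb{N}$ and $r>0$, $E_{n,r}^{T_1,T_2}:=\{(x,y)\in X\times X : d(T_1^i x, T_2^j y)<r \text{ for some } 0\le i,j<n\}$; $E_{n,r_n}^{T_1,T_2}$ denotes this set with $r=r_n$. *)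

From HB Require Import structures.
From mathcomp Require Import all_boot all_order all_algebra.
From mathcomp Require Import all_classical all_reals all_analysis.
Set Implicit Arguments. Unset Strict Implicit. Unset Printing Implicit Defensive.
Import Order.TTheory GRing.Theory Num.Theory.
Import numFieldNormedType.Exports.
Local Open Scope classical_set_scope.
Local Open Scope ring_scope.

Section Defs.
Context {R : realType}.

(* The circle R/Z is modelled by the fundamental domain [0,1) *)
Definition circle : set R := `[0, 1[%classic.

Definition frac (t : R) : R := t - (Num.floor t)%:~R.

Definition circ_dist (x y : R) : R := Num.min (frac (x - y)) (1 - frac (x - y)).

Definition rotation (alpha : R) (x : R) : R := frac (x + alpha).

Definition leb := (@lebesgue_measure R).

Definition lebesgue_mp (T : R -> R) : Prop :=
  (forall x, circle x -> circle (T x)) /\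
  measurable_fun circle T /\
  (forall A : set R, measurable A -> A `<=` circle ->
     leb (circle `&` T @^-1` A) = leb A).

(* exponential mixing for BV against L^infty on (X, T, Lebesgue).
   ||psi||_BV = sup_X |psi| + Var(psi), ||phi||_{L^infty} = ess sup |phi|;
   quantifying over all upper bounds S, V, M of these quantities is the
   same as using the norms themselves. *)
Definition exp_mixing_BV_Linf (T : R -> R) : Prop :=
  exists C theta : R, 0 < C /\ 0 < theta /\
  forall (psi phi : R -> R) (S V M : R) (n : nat),
    (forall x, x \in `[0, 1]%R -> `|psi x| <= S) ->
    (total_variation 0 1 psi <= V%:E)%E ->
    measurable_fun circle phi ->
    {ae leb, forall x, circle x -> `|phi x| <= M} ->
    `| (\int[leb]_(x in circle) (psi x * phi (iter n T x)))
       - (\int[leb]_(x in circle) psi x) * (\int[leb]_(x in circle) phi x) |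
      <= C * (S + V) * M * expR (- theta * n%:R).

Definition Ehit (T1 T2 : R -> R) (n : nat) (r : R) : set (R * R) :=
  [set xy | circle xy.1 /\ circle xy.2 /\
     exists i j : nat, (i < n)%N /\ (j < n)%N /\
       circ_dist (iter i T1 xy.1) (iter j T2 xy.2) < r].

Definition liminf_set {T : Type} (F : (set T)^nat) : set T :=
  \bigcup_N \bigcap_(n in [set n | (N <= n)%N]) F n.
Definition limsup_set {T : Type} (F : (set T)^nat) : set T :=
  \bigcap_N \bigcup_(n in [set n | (N <= n)%N]) F n.

End Defs.

From Pilot Require Import Defs.
From HB Require Import structures.
From mathcomp Require Import all_boot all_order all_algebra.
From mathcomp Require Import all_classical all_reals all_analysis.
From mathcomp Require Import ring lra zify.
Import Order.TTheory GRing.Theory Num.Theory.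
Import numFieldNormedType.Exports.
Local Open Scope classical_set_scope.
Local Open Scope ring_scope.

(* Since the rotation is an isometry,
   the y with d(T1^i x, T2^j y) < r form an arc of length 2r, so the x-section
   of E_{n,r} has measure O(n^2 r); this gives (1).  For (2), a point of the
   x-section of the limsup either hits with indices below N, then with radius
   r_N since (r_n) decreases, or hits at some (i, j) with max(i, j) + 1 = m >= N
   and radius r_m.  The latter "new hits" at time m have measure O(m r_m), so
   the x-section of the limsup has measure O(N^2 r_N + sum_(m >= N) m r_m),
   which tends to 0 because n^2 r_n -> 0 when (n r_n) is nonincreasing and
   summable.  Finally, the product measure integrates the measures of the
   x-sections. *)

Section nonincreasing_series.
Context {R : realType}.

Lemma nonincreasing_from1_le (u : R^nat) a b :
  (forall n, (1 <= n)%N -> u n.+1 <= u n) -> (1 <= a <= b)%N -> u b <= u a.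
Proof.
move=> u_dec; case: a => [//|a]; case: b => [//|b] /= ab.
apply: (@homo_leq _ (fun k => u k.+1) (fun x y => y <= x)) => //.
- by move=> y x z xy yz; exact: le_trans yz xy.
- by move=> k; exact: u_dec.
Qed.

Lemma nonincreasing_block_le_series (s : R^nat) M N :
  (forall n, (1 <= n)%N -> s n.+1 <= s n) -> (1 <= M <= N.+1)%N ->
  s N *+ (N.+1 - M) <= series s N.+1 - series s M.
Proof.
move=> s_dec /andP[M1 MN]; rewrite /series /= (big_cat_nat (leq0n M) MN) /=.
rewrite addrAC subrr add0r -sumr_const_nat; apply: ler_sum_nat => i /andP[Mi iN].
by apply: nonincreasing_from1_le => //; rewrite (leq_trans M1 Mi) -ltnS.
Qed.

(* Olivier's theorem: n s_n is dominated by twice the block sum of s over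
   (n/2, n], which tends to 0 by the Cauchy criterion. *)
Lemma nonincreasing_cvg_series_natmul0 (s : R^nat) :
  (forall n, 0 <= s n) -> (forall n, (1 <= n)%N -> s n.+1 <= s n) ->
  cvgn (series s) -> (fun n => n%:R * s n) @ \oo --> 0.
Proof.
move=> s_ge0 s_dec s_cvg.
have S_mono : {homo series s : n m / (n <= m)%N >-> n <= m}.
  move=> n m nm; rewrite /series /= (big_cat_nat (leq0n n) nm) /= lerDl.
  by apply: sumr_ge0 => i _.
have S_le := nondecreasing_cvgn_le S_mono s_cvg.
apply/cvgr0Pnorm_lt => e e_gt0.
have /cvgr_dist_lt/(_ (e / 2)) [|M _ S_near] := s_cvg; first lra.
exists (maxn M 1).*2 => // N /= N_ge; set M' := maxn M 1.
have block_lt : series s N.+1 - series s M' < e / 2.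
  have := S_near M' (leq_maxl M 1); have := S_le N.+1.
  by rewrite ltr_norml => ? /andP[? ?]; lra.
have block_ge := @nonincreasing_block_le_series s M' N s_dec.
have /block_ge {}block_ge : (1 <= M' <= N.+1)%N by rewrite leq_maxr; lia.
have N_le : (N%:R : R) <= 2 * (N.+1 - M')%:R.
  by rewrite -[2]/(2%:R : R) -natrM ler_nat; lia.
rewrite ger0_norm ?mulr_ge0 //.
move: block_ge; rewrite -mulr_natr; have := s_ge0 N; nra.
Qed.

Lemma eseries_EFin_lty (u : R^nat) :
  cvgn (series u) -> (\sum_(0 <= k <oo) (u k)%:E < +oo)%E.
Proof.
move=> u_cvg; have -> : (\sum_(0 <= k <oo) (u k)%:E)%E = limn (EFin \o series u).
  by congr (limn _); apply/funext => n /=; rewrite sumEFin.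
by rewrite EFin_lim ?ltry.
Qed.

End nonincreasing_series.

Section circle.
Context {R : realType}.

Lemma frac_ge0 (t : R) : 0 <= Defs.frac t.
Proof. by rewrite /Defs.frac subr_ge0 floor_le. Qed.

Lemma frac_lt1 (t : R) : Defs.frac t < 1.
Proof. by rewrite /Defs.frac ltrBlDl; have := floorD1_gt t; rewrite intrD. Qed.

Lemma circ_dist_lt_int (u v r : R) :
  circ_dist u v < r -> exists m : int, `|u - v - m%:~R| < r.
Proof.
rewrite /circ_dist gt_min => /orP[dist_lt|].
  by exists (Num.floor (u - v)); rewrite ger0_norm ?frac_ge0.
have := frac_lt1 (u - v); rewrite /Defs.frac => frac_lt dist_lt.
by exists (Num.floor (u - v) + 1); rewrite intrD ler0_norm; lra.
Qed.

Lemma iter_rotation (alpha y : R) j :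
  exists z : int, iter j (rotation alpha) y = y + j%:R * alpha + z%:~R.
Proof.
elim: j => [|j [z IH]] /=; first by exists 0; rewrite mul0r !addr0.
rewrite IH; exists (z - Num.floor (y + j%:R * alpha + z%:~R + alpha)).
by rewrite /rotation /Defs.frac intrB mulrSr; ring.
Qed.

End circle.

Section lebesgue_outer_measure.
Context {R : realType}.

Lemma le_leb {A B : set R} : A `<=` B -> (leb A <= leb B)%E.
Proof.
move=> AB; rewrite /leb /lebesgue_measure /lebesgue_stieltjes_measure /measure_extension.
exact: le_outer_measure.
Qed.

Lemma lebU2 (A B : set R) : (leb (A `|` B) <= leb A + leb B)%E.
Proof.
rewrite /leb /lebesgue_measure /lebesgue_stieltjes_measure /measure_extension.
exact: outer_measureU2.
Qed.

Lemma leb_bigcup (F : (set R)^nat) :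
  (leb (\bigcup_n F n) <= \sum_(0 <= n <oo) leb (F n))%E.
Proof.
rewrite /leb /lebesgue_measure /lebesgue_stieltjes_measure /measure_extension.
exact: outer_measure_sigma_subadditive.
Qed.

Lemma leb_bigcup_tail N (F : (set R)^nat) :
  (leb (\bigcup_(n in ~` `I_N) F n) <= \sum_(N <= n <oo) leb (F n))%E.
Proof.
rewrite /leb /lebesgue_measure /lebesgue_stieltjes_measure /measure_extension.
exact: outer_measure_sigma_subadditive_tail.
Qed.

Lemma leb_bigcup_ord_le n (F : (set R)^nat) (c : R) : 0 <= c ->
  (forall i, (i < n)%N -> (leb (F i) <= c%:E)%E) ->
  (leb (\bigcup_(i in `I_n) F i) <= (n%:R * c)%:E)%E.
Proof.
move=> c_ge0; elim: n => [|n IH] F_le.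
  by rewrite mul0r II0 bigcup_set0 /leb measure0.
rewrite IIS bigcup_setU bigcup_set1.
rewrite mulrSr mulrDl mul1r EFinD; apply: le_trans (lebU2 _ _) _.
by apply: leeD; [apply: IH => i /ltnW; exact: F_le | exact: F_le].
Qed.

Lemma leb_eq0_cvg0 (A : set R) (c : (\bar R)^nat) :
  c @ \oo --> 0%E -> (\forall N \near \oo, leb A <= c N)%E -> leb A = 0%E.
Proof.
move=> c0 A_le; apply/le_anti/andP; split; last exact: measure_ge0.
exact: cvge_to_ge c0 A_le.
Qed.

Lemma leb_liminf_set_eq0 (F : (set R)^nat) (b : R^nat) :
  b @ \oo --> 0 -> (\forall n \near \oo, leb (F n) <= (b n)%:E)%E ->
  leb (liminf_set F) = 0%E.
Proof.
move=> b0 F_le; apply/le_anti/andP; split; last exact: measure_ge0.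
apply: le_trans (leb_bigcup _) _; rewrite eseries0 // => N _ _.
apply: (@leb_eq0_cvg0 _ (EFin \o b)).
  by apply: cvg_EFin; [exact: nearW | exact: b0].
near=> n; apply: le_trans (_ : leb (F n) <= _)%E; last by near: n.
by apply: le_leb => y; apply; near: n; exists N.
Unshelve. all: by end_near. Qed.

End lebesgue_outer_measure.

Section hits.
Context {R : realType}.

Lemma xsection_liminf_set (F : (set (R * R))^nat) (x : R) :
  xsection (liminf_set F) x = liminf_set (fun n => xsection (F n) x).
Proof.
apply/seteqP; split => y; rewrite /xsection /= in_setE => -[N _ FN];
  by exists N => // n /FN; rewrite /= in_setE.
Qed.

Lemma xsection_limsup_set (F : (set (R * R))^nat) (x : R) :
  xsection (limsup_set F) x = limsup_set (fun n => xsection (F n) x).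
Proof.
apply/seteqP; split => y; rewrite /xsection /= ?in_setE => F_io N _;
  by have [n Nn Fn] := F_io N I; exists n; rewrite //= ?in_setE in Fn *.
Qed.

Definition close_at (T1 T2 : R -> R) (x : R) (i j : nat) (r : R) : set R :=
  [set y | circle y /\ circ_dist (iter i T1 x) (iter j T2 y) < r].

Lemma xsection_Ehit (T1 T2 : R -> R) n (r x : R) :
  xsection (Ehit T1 T2 n r) x `<=`
  \bigcup_(i in `I_n) \bigcup_(j in `I_n) close_at T1 T2 x i j r.
Proof.
move=> y; rewrite /xsection /= in_setE => -[_ [cy [i [j [ni [nj hit]]]]]].
by exists i => //; exists j.
Qed.

(* Hits at indices (i, j) with max i j = m - 1: those counted in E_m but not
   in E_(m-1). *)
Definition new_hits (T1 T2 : R -> R) (x : R) (m : nat) (r : R) : set R :=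
  \bigcup_(j in `I_m) close_at T1 T2 x m.-1 j r `|`
  \bigcup_(i in `I_m) close_at T1 T2 x i m.-1 r.

Lemma xsection_limsup_Ehit_sub (T1 T2 : R -> R) (r : R^nat) (x : R) N :
  (forall n, (1 <= n)%N -> r n.+1 <= r n) -> (1 <= N)%N ->
  limsup_set (fun n => xsection (Ehit T1 T2 n (r n)) x) `<=`
  xsection (Ehit T1 T2 N (r N)) x `|` \bigcup_(m in ~` `I_N) new_hits T1 T2 x m (r m).
Proof.
move=> r_dec N1 y /(_ N I) [n /= Nn]; rewrite /xsection /= !in_setE.
move=> [cx [cy [i [j [ni [nj hit]]]]]].
have r_le a : (1 <= a <= n)%N -> r n <= r a by move=> ?; exact: nonincreasing_from1_le.
have [ijN|Nij] := leqP (maxn i j).+1 N.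
  left; split => //; split => //; exists i, j; split; first lia; split; first lia.
  by apply: lt_le_trans hit (r_le _ _); lia.
right; have [ji|ij] := leqP j i.
- rewrite (maxn_idPl ji) in Nij; exists i.+1; first by rewrite /=; lia.
  left; exists j; first by rewrite /=; lia.
  by split => //; apply: lt_le_trans hit (r_le _ _); lia.
- rewrite (maxn_idPr (ltnW ij)) in Nij; exists j.+1; first by rewrite /=; lia.
  right; exists i; first by rewrite /=; lia.
  by split => //; apply: lt_le_trans hit (r_le _ _); lia.
Qed.

End hits.

Section rotation_hits.
Context {R : realType}.
Variables (T1 : R -> R) (alpha : R).

Lemma close_at_rotation_sub (x : R) i j (r : R) : r <= 1 ->
  let c := Defs.frac (iter i T1 x - j%:R * alpha) in
  close_at T1 (rotation alpha) x i j r `<=`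
  ball (c - 1) r `|` ball c r `|` ball (c + 1) r.
Proof.
move=> r1 c y [+ /circ_dist_lt_int [m]].
have [z ->] := iter_rotation alpha y j.
rewrite /circle /= in_itv /= => /andP[y_ge0 y_lt1] close.
have := frac_ge0 (iter i T1 x - j%:R * alpha).
have := frac_lt1 (iter i T1 x - j%:R * alpha); rewrite -/c => c_lt1 c_ge0.
set k := Num.floor (iter i T1 x - j%:R * alpha) - z - m.
have {close} : `|c + k%:~R - y| < r.
  suff -> : c + k%:~R - y = iter i T1 x - (y + j%:R * alpha + z%:~R) - m%:~R by [].
  by rewrite /k /c /Defs.frac !intrB; ring.
move=> /[dup] /ltr_normlP [? ?].
have : (-2)%:~R < k%:~R :> R /\ k%:~R < 2%:~R :> R.
  by rewrite -[(-2)%:~R]/(-2 : R) -[2%:~R]/(2 : R); split; lra.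
rewrite !ltr_int => -[? ?]; have : k = -1 \/ k = 0 \/ k = 1 by lia.
by case=> [|[|]] ->; rewrite /ball /= ?addr0; [left; left|left; right|right].
Qed.

Lemma leb_close_at_rotation (x : R) i j (r : R) : 0 < r ->
  (leb (close_at T1 (rotation alpha) x i j r) <= (r * 6)%:E)%E.
Proof.
move=> r_gt0; have [r6_ge1|r6_lt1] := lerP 1 (r * 6).
  apply: (@le_trans _ _ (leb (circle : set R))); first by apply: le_leb => y [].
  rewrite /leb /circle lebesgue_measure_itv /= lte_fin ltr01 /=.
  by rewrite oppr0 adde0 lee_fin.
have r_le1 : r <= 1 by lra.
have /le_leb close_at_le := close_at_rotation_sub x i j r r_le1.
apply: le_trans close_at_le _.
have -> : r * 6 = r *+ 2 + r *+ 2 + r *+ 2 by rewrite -!mulrnDr mulr_natr.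
rewrite !EFinD; apply: le_trans (lebU2 _ _) _.
apply: leeD; last by rewrite /leb lebesgue_measure_ball // ltW.
apply: le_trans (lebU2 _ _) _.
by apply: leeD; rewrite /leb lebesgue_measure_ball // ltW.
Qed.

Lemma leb_xsection_Ehit_rotation n (r x : R) : 0 < r ->
  (leb (xsection (Ehit T1 (rotation alpha) n r) x) <= (n%:R ^+ 2 * r * 6)%:E)%E.
Proof.
move=> r_gt0; apply: le_trans (le_leb (xsection_Ehit T1 (rotation alpha) n r x)) _.
have -> : n%:R ^+ 2 * r * 6 = n%:R * (n%:R * (r * 6)) by ring.
apply: leb_bigcup_ord_le => [|i _]; first by rewrite !mulr_ge0 // ltW.
apply: leb_bigcup_ord_le => [|j _]; first by rewrite mulr_ge0 // ltW.
exact: leb_close_at_rotation.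
Qed.

Lemma leb_new_hits_rotation (x : R) m (r : R) : 0 < r ->
  (leb (new_hits T1 (rotation alpha) x m r) <= (m%:R * r * 12)%:E)%E.
Proof.
move=> r_gt0; have -> : m%:R * r * 12 = m%:R * (r * 6) + m%:R * (r * 6) by ring.
rewrite EFinD; apply: le_trans (lebU2 _ _) _.
have r6_ge0 : 0 <= r * 6 by rewrite mulr_ge0 // ltW.
by apply: leeD; apply: leb_bigcup_ord_le => // k _; exact: leb_close_at_rotation.
Qed.

Variables (r : R^nat) (x : R).
Hypothesis r_gt0 : forall n, (1 <= n)%N -> 0 < r n.

Lemma leb_xsection_liminf_Ehit_rotation :
  (fun n => n%:R ^+ 2 * r n) @ \oo --> 0 ->
  leb (xsection (liminf_set (fun n => Ehit T1 (rotation alpha) n (r n))) x) = 0%E.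
Proof.
move=> nnr0; rewrite xsection_liminf_set.
apply: (@leb_liminf_set_eq0 _ _ (fun n => n%:R ^+ 2 * r n * 6)).
  by rewrite -(mul0r 6); exact: cvgMr_tmp.
by near=> n; apply: leb_xsection_Ehit_rotation; apply: r_gt0; near: n; exists 1%N.
Unshelve. all: by end_near. Qed.

Lemma leb_xsection_limsup_Ehit_rotation :
  (forall n, (1 <= n)%N -> r n.+1 <= r n) ->
  (forall n, (1 <= n)%N -> n.+1%:R * r n.+1 <= n%:R * r n) ->
  cvgn (series (fun n => n%:R * r n)) ->
  leb (xsection (limsup_set (fun n => Ehit T1 (rotation alpha) n (r n))) x) = 0%E.
Proof.
move=> r_dec nr_dec nr_cvg.
have nr_ge0 n : 0 <= n%:R * r n.
  by case: n => [|n]; rewrite ?mul0r // mulr_ge0 // ltW // r_gt0.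
pose f m := ((m%:R * r m * 12)%:E : \bar R).
have f_ge0 m : true -> (0 <= f m)%E by rewrite lee_fin mulr_ge0.
have f_fin : (\sum_(0 <= m <oo) f m < +oo)%E.
  apply: eseries_EFin_lty.
  rewrite (_ : series _ = (fun n => series (fun m => m%:R * r m) n * 12)).
    exact: is_cvgMr_tmp.
  by apply/funext => n; rewrite /series /= big_distrl.
have nnr0 : (fun N => (N%:R ^+ 2 * r N * 6)%:E) @ \oo --> 0%E.
  apply: cvg_EFin; first exact: nearW.
  rewrite -(mul0r 6); apply: cvgMr_tmp.
  have := nonincreasing_cvg_series_natmul0 _ nr_ge0 nr_dec nr_cvg.
  by under eq_fun do rewrite mulrA -expr2.
apply: (@leb_eq0_cvg0 _ _
  (fun N => (N%:R ^+ 2 * r N * 6)%:E + \sum_(N <= m <oo) f m)%E).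
  rewrite -[X in _ --> X]adde0.
  by apply: cvgeD; [|exact: nnr0|exact: nneseries_tail_cvg f_fin f_ge0].
near=> N; have N1 : (1 <= N)%N by near: N; exists 1%N.
rewrite xsection_limsup_set.
apply: le_trans (le_leb (xsection_limsup_Ehit_sub T1 (rotation alpha) r x N r_dec N1)) _.
apply: le_trans (lebU2 _ _) _.
apply: leeD; first exact: leb_xsection_Ehit_rotation _ _ _ (r_gt0 N N1).
apply: le_trans (leb_bigcup_tail _ _) _.
apply: lee_nneseries => [m _ _|[_|m _]]; first exact: measure_ge0.
  rewrite /f !mul0r; apply: le_trans (le_leb (_ : _ `<=` set0)) _.
    by move=> y [] [j].
  by rewrite /leb measure0.
exact: leb_new_hits_rotation _ _ _ (r_gt0 _ _).
Unshelve. all: by end_near. Qed.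

End rotation_hits.

Theorem mainTheorem9 (R : realType) (T1 : R -> R) (alpha : R) :
  lebesgue_mp T1 -> exp_mixing_BV_Linf T1 ->
  (forall r : R^nat, (forall n, (1 <= n)%N -> 0 < r n) ->
     (fun n => n%:R ^+ 2 * r n) @ \oo --> 0 ->
     ((leb \x leb) (liminf_set (fun n => Ehit T1 (rotation alpha) n (r n))) = 0)%E) /\
  (forall r : R^nat, (forall n, (1 <= n)%N -> 0 < r n) ->
     (forall n, (1 <= n)%N -> r n.+1 <= r n) ->
     (forall n, (1 <= n)%N -> n.+1%:R * r n.+1 <= n%:R * r n) ->
     cvgn (series (fun n => n%:R * r n)) ->
     ((leb \x leb) (limsup_set (fun n => Ehit T1 (rotation alpha) n (r n))) = 0)%E).
Proof.
move=> _ _; split=> [r r_gt0 nnr0|r r_gt0 r_dec nr_dec nr_cvg];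
  apply: integral0_eq => x _ /=.
- exact: leb_xsection_liminf_Ehit_rotation.
- exact: leb_xsection_limsup_Ehit_rotation.
Qed.
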